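(* Let $P,Q,N>0$, let $\rho=P/N$, and let $A$ be a nonnegative random variable with a probability density function on $[0,\infty)$. For real $\alpha$ define the random variable $$J(\alpha,A)=\log\frac{P\left[A(P+Q)+N\right]}{(1-\alpha)^2APQ+(P+\alpha^2Q)N}.$$ Then for every $R\ge 0$, $$\min_{\alpha\in\mathbb{R}}\Pr\left[J(\alpha,A)\le R\right]=\Pr\left[A\le \frac{e^{R}-1}{\rho}\right],$$ and the minimum is attained at $\alpha^\ast=1-e^{-R}$. In particular this minimum equals the outage probability $\Pr[\log(1+A\rho)\le R]$ obtained when the decoder also knows the interference.
   Context: Interpretation: quasi-static channel $Y_i=\sqrt{A}(X_i+S_i)+Z_i$, $i=1,\dots,n$, with $Z_i$ i.i.d. $\mathcal{CN}(0,N)$, interference $S_i$ i.i.d. $\mathcal{CN}(0,Q)$ known noncausally to the encoder only, input average power constraint $P$, and a single fading coefficient $A$ (constant over the block, independent of $S$) known to the decoder but not the encoder. $J(\alpha,A)$ is the rate achieved, conditional on $A$, by dirty paper coding with $X\sim\mathcal{CN}(0,P)$ independent of $S$ and auxiliary variable $U=X+\alpha S$. Logarithms are natural. *)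

From mathcomp Require Import all_boot all_order all_algebra.
From mathcomp Require Import all_classical all_reals all_analysis.
Set Implicit Arguments. Unset Strict Implicit. Unset Printing Implicit Defensive.
Import Order.TTheory GRing.Theory Num.Theory.
Local Open Scope ring_scope.

Definition Jrate {R : realType} (P Q N alpha a : R) : R :=
  ln ((P * (a * (P + Q) + N)) /
      ((1 - alpha) ^+ 2 * a * P * Q + (P + alpha ^+ 2 * Q) * N)).

From mathcomp Require Import all_boot all_order all_algebra.
From mathcomp Require Import all_classical all_reals all_analysis.
From mathcomp Require Import ring.
Import Order.TTheory GRing.Theory Num.Theory.
Import measurable_realfun.
Local Open Scope classical_set_scope.
Local Open Scope ring_scope.

(* Writing J(alpha, a) = ln (num a / den alpha a), the identity
     (N + a P) den alpha a - N num a = Q ((1 - alpha) a P - alpha N)^2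
   (Costa's MMSE computation) shows J(alpha, a) <= ln (1 + a rho) for every
   alpha, so the event {A <= (e^R - 1)/rho} is contained in {J(alpha, A) <= R}.
   At alpha = 1 - e^-R the event {J(alpha, A) <= R} is exactly
   {A P <= (e^R - 1) N}, since e^R den - num factors as
   ((e^R - 1) N - a P) (P + (1 - e^-R) Q). Neither step uses the density of A. *)

Lemma ln_le_expR (R : realType) (x r : R) : 0 < x -> (ln x <= r) = (x <= expR r).
Proof. by move=> x_gt0; rewrite -{1}(expRK r) ler_ln // posrE expR_gt0. Qed.

Lemma ln1DM_le (R : realType) (rho a r : R) : 0 < rho -> 0 <= a ->
  (ln (1 + a * rho) <= r) = (a <= (expR r - 1) / rho).
Proof.
move=> rho_gt0 a_ge0.
rewrite ln_le_expR ?ler_pdivlMr ?lerBrDl //.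
by rewrite (lt_le_trans ltr01) // lerDl mulr_ge0 // ltW.
Qed.

Lemma measurable_le_affine d (T : measurableType d) (R : realType)
    (g : T -> R) (a b c e : R) :
  measurable_fun setT g -> measurable [set w | a * g w + b <= c * g w + e].
Proof.
move=> mg; rewrite -(setTI [set w | _]); apply: measurable_fun_le => //.
  by apply: measurable_funD => //; apply: measurable_funM.
by apply: measurable_funD => //; apply: measurable_funM.
Qed.

Section DirtyPaperRate.
Variables (R : realType) (P Q N : R).
Hypotheses (P_gt0 : 0 < P) (Q_gt0 : 0 < Q) (N_gt0 : 0 < N).

Definition Jnum (a : R) : R := P * (a * (P + Q) + N).

Definition Jden (alpha a : R) : R :=
  (1 - alpha) ^+ 2 * a * P * Q + (P + alpha ^+ 2 * Q) * N.

Lemma JrateE (alpha a : R) : Jrate P Q N alpha a = ln (Jnum a / Jden alpha a).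
Proof. by []. Qed.

Lemma Jnum_gt0 (a : R) : 0 <= a -> 0 < Jnum a.
Proof.
move=> a_ge0; apply: mulr_gt0 => //; apply: ltr_wpDl N_gt0.
exact/mulr_ge0/ltW/addr_gt0.
Qed.

Lemma Jden_gt0 (alpha a : R) : 0 <= a -> 0 < Jden alpha a.
Proof.
move=> a_ge0; apply: ltr_wpDl.
  by rewrite mulr_ge0 ?(ltW Q_gt0) // mulr_ge0 ?(ltW P_gt0) // mulr_ge0 ?sqr_ge0.
by rewrite mulr_gt0 // ltr_wpDr // mulr_ge0 ?sqr_ge0 // ltW.
Qed.

Lemma Jrate_le (alpha a r : R) : 0 <= a ->
  (Jrate P Q N alpha a <= r) = (Jnum a <= expR r * Jden alpha a).
Proof.
by move=> a_ge0; rewrite JrateE ln_le_expR ?ler_pdivrMr ?divr_gt0 ?Jnum_gt0 ?Jden_gt0.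
Qed.

(* The gap is a square, vanishing at the MMSE coefficient alpha = aP/(aP + N). *)
Lemma Jden_mmse (alpha a : R) :
  (N + a * P) * Jden alpha a - N * Jnum a
  = Q * ((1 - alpha) * a * P - alpha * N) ^+ 2.
Proof. by rewrite /Jden /Jnum; ring. Qed.

Lemma Jrate_le_capacity (alpha a : R) : 0 <= a ->
  Jrate P Q N alpha a <= ln (1 + a * (P / N)).
Proof.
move=> a_ge0; have Jden_pos : 0 < Jden alpha a by exact: Jden_gt0.
rewrite JrateE ler_ln ?posrE ?divr_gt0 ?Jnum_gt0 //; last first.
  by rewrite ltr_wpDr ?ltr01 // mulr_ge0 // divr_ge0 // ltW.
rewrite ler_pdivrMr // -(ler_pM2l N_gt0) -subr_ge0.
have -> : N * ((1 + a * (P / N)) * Jden alpha a) = (N + a * P) * Jden alpha a.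
  by field; rewrite gt_eqF.
by rewrite Jden_mmse mulr_ge0 ?sqr_ge0 // ltW.
Qed.

Lemma Jden_opt_factor (e a : R) : 0 < e ->
  e * Jden (1 - e^-1) a - Jnum a = ((e - 1) * N - a * P) * (P + (1 - e^-1) * Q).
Proof. by move=> e_gt0; rewrite /Jden /Jnum; field; rewrite gt_eqF. Qed.

Lemma Jrate_opt_le (r a : R) : 0 <= r -> 0 <= a ->
  (Jrate P Q N (1 - expR (- r)) a <= r) = (ln (1 + a * (P / N)) <= r).
Proof.
move=> r_ge0 a_ge0.
have e_ge1 : 1 <= expR r by rewrite -expR0 ler_expR.
have scale_gt0 : 0 < P + (1 - (expR r)^-1) * Q.
  rewrite ltr_wpDr // mulr_ge0 ?(ltW Q_gt0) // subr_ge0.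
  by rewrite invf_le1 // expR_gt0.
rewrite Jrate_le // expRN -subr_ge0 Jden_opt_factor ?expR_gt0 // pmulr_lge0 //.
rewrite ln1DM_le ?divr_gt0 // ler_pdivlMr ?divr_gt0 // mulrA ler_pdivrMr //.
by rewrite subr_ge0.
Qed.

End DirtyPaperRate.

Lemma measurable_Jrate_le d (T : measurableType d) (R : realType)
    (P Q N alpha r : R) (A : T -> R) :
  0 < P -> 0 < Q -> 0 < N -> measurable_fun setT A -> (forall w, 0 <= A w) ->
  measurable [set w | Jrate P Q N alpha (A w) <= r].
Proof.
move=> P_gt0 Q_gt0 N_gt0 mA A_ge0.
have -> : [set w | Jrate P Q N alpha (A w) <= r] =
    [set w | (P * (P + Q)) * A w + P * N <=
       (expR r * ((1 - alpha) ^+ 2 * P * Q)) * A w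
       + expR r * ((P + alpha ^+ 2 * Q) * N)].
  by apply/funext => w /=; rewrite Jrate_le //; congr (_ <= _); rewrite /Jnum /Jden; ring.
exact: measurable_le_affine.
Qed.

Theorem mainTheorem2 (d : measure_display) (T : measurableType d)
  (R : realType) (Pr : probability T R) (A : T -> R)
  (P Q N : R) (hP : 0 < P) (hQ : 0 < Q) (hN : 0 < N)
  (mA : measurable_fun setT A) (A_ge0 : forall w, 0 <= A w)
  (f : R -> R) (mf : measurable_fun setT f) (f_ge0 : forall x, 0 <= f x)
  (f_supp : forall x, x < 0 -> f x = 0)
  (f_density : forall B : set R, measurable B ->
     Pr (A @^-1` B) = (\int[lebesgue_measure]_(x in B) (f x)%:E)%E) :
  forall r : R, 0 <= r ->
    let rho := P / N in
    let target := Pr [set w | (A w <= (expR r - 1) / rho)%R] in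
    (forall alpha : R,
       (target <= Pr [set w | (Jrate P Q N alpha (A w) <= r)%R])%E) /\
    Pr [set w | (Jrate P Q N (1 - expR (- r)) (A w) <= r)%R] = target /\
    target = Pr [set w | (ln (1 + A w * rho) <= r)%R].
Proof.
move=> r r_ge0 rho target.
have rho_gt0 : 0 < rho by rewrite divr_gt0.
have targetE : target = Pr [set w | ln (1 + A w * rho) <= r].
  by congr (Pr _); apply/seteqP; split=> w /=; rewrite ln1DM_le.
split; [|split]; last exact: targetE.
- move=> alpha; apply: le_measure; rewrite ?inE.
  + by rewrite -(setTI [set w | _]); apply: measurable_fun_le.
  + exact: measurable_Jrate_le.
  + move=> w /=; rewrite -ln1DM_le //; apply: le_trans.
    exact: Jrate_le_capacity.
- by rewrite targetE; congr (Pr _); apply/seteqP; split=> w /=; rewrite Jrate_opt_le.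
Qed.
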